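(* Let $\mathcal{T}_0$ be a triangulation of a finite point set $\mathcal{P}$ in the plane and let $F=\langle f_1,\ldots,f_r\rangle$ be a valid sequence of flips with $\mathcal{T}_0 \xrightarrow{F} \mathcal{T}_r$. Let $\pi(F)$ be a permutation of the flips in $F$ that is a topological sorting of the DAG $\mathcal{D}_F$. Then $\pi(F)$ is a valid sequence of flips with respect to $\mathcal{T}_0$ and $\mathcal{T}_0 \xrightarrow{\pi(F)} \mathcal{T}_r$.
   Context: A triangulation of a finite point set $\mathcal{P}$ in the plane is a partition of the convex hull of $\mathcal{P}$ into triangles whose vertex set is $\mathcal{P}$. For an interior edge $e$ of a triangulation $\mathcal{T}$, the quadrilateral associated with $e$ is the union of the two triangles of $\mathcal{T}$ sharing $e$. A flip $f$ with underlying edge $\epsilon(f)=e$ is admissible in $\mathcal{T}$ if $e\in\mathcal{T}$ and its associated quadrilateral is convex; performing it replaces $e$ by the other diagonal $\phi(f)$ of that quadrilateral. Two distinct edges share a triangle in $\mathcal{T}$ if they are edges of the same triangle of $\mathcal{T}$. A sequence $F=\langle f_1,\ldots,f_r\rangle$ is valid with respect to $\mathcal{T}$ if there are triangulations $\mathcal{T}_0=\mathcal{T},\mathcal{T}_1,\ldots,\mathcal{T}_r$ such that $f_i$ is admissible in $\mathcal{T}_{i-1}$ and performing it yields $\mathcal{T}_i$; then we write $\mathcal{T}\xrightarrow{F}\mathcal{T}_r$. Flips in a sequence are distinct objects even if they have the same underlying edge. For $1\le i<j\le r$, flip $f_j$ is adjacent to $f_i$ (written $f_i\to f_j$) if (1)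 either $\phi(f_i)=\epsilon(f_j)$ or $\phi(f_i)$ and $\epsilon(f_j)$ share a triangle in $\mathcal{T}_{j-1}$, and (2) there is no $p$ with $i<p<j$ and $\epsilon(f_p)=\phi(f_i)$. $\mathcal{D}_F$ is the directed acyclic graph whose nodes are the flips of $F$ and whose arcs are the pairs $f_i\to f_j$. *)

(* Points of P are indexed by 'I_n via an injective map p. *)
From HB Require Import structures.
From mathcomp Require Import all_boot all_order all_algebra all_fingroup.
Set Implicit Arguments. Unset Strict Implicit. Unset Printing Implicit Defensive.
Import Order.TTheory GRing.Theory Num.Theory.
Local Open Scope ring_scope.

Section Triang.
Variables (R : realFieldType) (n : nat) (p : 'I_n -> R * R).

Definition orient (a b c : 'I_n) : R :=
  ((p b).1 - (p a).1) * ((p c).2 - (p a).2) - ((p b).2 - (p a).2) * ((p c).1 - (p a).1).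

Definition in_conv (S : {set 'I_n}) (x : R * R) : Prop :=
  exists w : 'I_n -> R,
    [/\ forall i, 0 <= w i, forall i, i \notin S -> w i = 0,
        \sum_i w i = 1 &
        x = (\sum_i w i * (p i).1, \sum_i w i * (p i).2)].

Definition is_triangle (t : {set 'I_n}) : Prop :=
  exists a b c, t = [set a; b; c] /\ orient a b c != 0.

(* T is a triangulation of P: triangles with vertices in P covering conv(P),
   meeting pairwise in a common face (possibly empty), and every point of P
   is a vertex. *)
Definition is_triangulation (T : {set {set 'I_n}}) : Prop :=
  [/\ forall t, t \in T -> is_triangle t,
      forall x, in_conv setT x <-> exists2 t, t \in T & in_conv t x,
      forall t1 t2, t1 \in T -> t2 \in T -> forall x,
        (in_conv t1 x /\ in_conv t2 x) <-> in_conv (t1 :&: t2) x &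
      forall i, exists2 t, t \in T & i \in t].

(* strictly convex quadrilateral with diagonals ab and cd *)
Definition convex_quad (a b c d : 'I_n) : Prop :=
  orient a b c * orient a b d < 0 /\ orient c d a * orient c d b < 0.

End Triang.

(* A flip is a pair (underlying edge eps, new diagonal phi). *)
Definition flip (n : nat) := ({set 'I_n} * {set 'I_n})%type.
Definition eps n (f : flip n) := f.1.
Definition phi n (f : flip n) := f.2.

Definition admissible (R : realFieldType) n (p : 'I_n -> R * R)
  (T : {set {set 'I_n}}) (f : flip n) : Prop :=
  exists a b c d,
    [/\ eps f = [set a; b], [set a; b; c] \in T, [set a; b; d] \in T,
        phi f = [set c; d] & convex_quad p a b c d].

Definition perform n (T : {set {set 'I_n}}) (f : flip n) : {set {set 'I_n}} :=
  (T :\: [set t in T | eps f \subset t])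
    :|: [set phi f :|: [set a] | a in eps f].

Definition after n (T : {set {set 'I_n}}) (F : seq (flip n)) (k : nat) :=
  foldl (@perform n) T (take k F).

Definition f0 n : flip n := (set0, set0).

Definition valid (R : realFieldType) n (p : 'I_n -> R * R)
  (T : {set {set 'I_n}}) (F : seq (flip n)) : Prop :=
  forall k, (k < size F)%N ->
    admissible p (after T F k) (nth (f0 n) F k) /\
    is_triangulation p (after T F k.+1).

Definition share_tri n (T : {set {set 'I_n}}) (e1 e2 : {set 'I_n}) : Prop :=
  [/\ e1 != e2, #|e1| = 2%N, #|e2| = 2%N &
      exists2 t, t \in T & e1 \subset t /\ e2 \subset t].

(* arc f_i -> f_j of D_F (0-based positions); T_{j-1} in 1-based indexing
   is the triangulation after the first j (0-based) flips *)
Definition arc n (T : {set {set 'I_n}}) (F : seq (flip n)) (i j : nat) : Prop :=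
  [/\ (i < j)%N, (j < size F)%N,
      phi (nth (f0 n) F i) = eps (nth (f0 n) F j)
      \/ share_tri (after T F j) (phi (nth (f0 n) F i)) (eps (nth (f0 n) F j)) &
      forall q, (i < q)%N -> (q < j)%N ->
        eps (nth (f0 n) F q) != phi (nth (f0 n) F i)].

Definition permuted n (F : seq (flip n)) (s : {perm 'I_(size F)}) : seq (flip n) :=
  [seq nth (f0 n) F (s k) | k <- enum 'I_(size F)].

(* s is a topological sorting of D_F: every arc goes forward in the new order *)
Definition topo_sort n (T : {set {set 'I_n}}) (F : seq (flip n))
  (s : {perm 'I_(size F)}) : Prop :=
  forall i j : 'I_(size F), arc T F i j -> ((s^-1)%g i < (s^-1)%g j)%N.
Arguments permuted {n} F s.
Arguments topo_sort {n} T F s.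

(* The first flip f_k of pi(F) is a source of D_F; say it
   replaces the diagonal ab of the convex quadrilateral abcd by cd.  If an earlier flip f_m
   created an edge of abc or abd, the last such flip would be adjacent to f_k.  Hence abc and
   abd are triangles of T_0, ..., T_k, and by elementary facts about triangulations (an edge
   borders at most two triangles, which lie on opposite sides of it, and no triangle contains
   the other diagonal cd) no earlier flip touches them or creates a triangle on ab.  So f_k
   commutes with f_0, ..., f_(k-1): performing it first gives a valid sequence with the same
   final triangulation, whose DAG maps into D_F, and the induction hypothesis applies to the
   remaining flips of pi(F). *)

From Pilot Require Import Defs.
From mathcomp Require Import all_boot all_order all_algebra all_fingroup.
From mathcomp Require Import ring lra zify.
Set Implicit Arguments. Unset Strict Implicit. Unset Printing Implicit Defensive.
Import Order.TTheory GRing.Theory Num.Theory.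

Lemma set3P (T : finType) (z a b c : T) : reflect [\/ z = a, z = b | z = c] (z \in [set a; b; c]).
Proof.
rewrite !inE; apply: (iffP idP).
  by case/orP=> [/orP[]|] /eqP ->; [apply: Or31 | apply: Or32 | apply: Or33].
by case=> ->; rewrite eqxx ?orbT.
Qed.

Section Perform.
Variable n : nat.
Implicit Types (T : {set {set 'I_n}}) (f g : flip n) (a b c d x y : 'I_n) (e t : {set 'I_n}).

Definition new_triangles f := [set phi f :|: [set x] | x in eps f].

Lemma in_perform T f t :
  (t \in perform T f) = (t \in T) && ~~ (eps f \subset t) || (t \in new_triangles f).
Proof. by rewrite !inE; case: (t \in T); rewrite ?andbF ?andbT. Qed.

Lemma in_new_triangles f a b c d t : eps f = [set a; b] -> phi f = [set c; d] ->
  (t \in new_triangles f) = (t == [set c; d; a]) || (t == [set c; d; b]).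
Proof.
rewrite /new_triangles => -> ->; apply/imsetP/orP.
  by case=> x; rewrite !inE => /orP [] /eqP -> ->; [left | right].
by case=> /eqP ->; [exists a | exists b]; rewrite ?inE ?eqxx ?orbT.
Qed.

Lemma pair_subset a b t : ([set a; b] \subset t) = (a \in t) && (b \in t).
Proof. by rewrite subUset !sub1set. Qed.

Lemma in_perform_flip T t f a b c d : eps f = [set a; b] -> phi f = [set c; d] ->
  (t \in perform T f) =
  (t \in T) && ~~ ((a \in t) && (b \in t)) || (t == [set c; d; a]) || (t == [set c; d; b]).
Proof. by move=> Ee Ep; rewrite in_perform (in_new_triangles _ Ee Ep) Ee pair_subset orbA. Qed.

Lemma pair_sub_triangle (a b c y : 'I_n) : y \in [set a; b] -> [set y; c] \subset [set a; b; c].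
Proof. by rewrite pair_subset !inE => /orP[] ->; rewrite eqxx !orbT. Qed.

Lemma pair_in_triangle e c d x : c != d -> e \subset [set c; d; x] -> #|e| = 2 ->
  e != [set c; d] -> (e \subset [set x; c]) || (e \subset [set x; d]).
Proof.
move=> cd sE cE ne.
have in3 z : z \in e -> [\/ z = c, z = d | z = x].
  by move=> /(subsetP sE) /set3P.
have xe : x \in e.
  apply: contraNT ne => xNe; rewrite eqEcard cE cards2 cd andbT; apply/subsetP => z ze.
  by case: (in3 z ze) => ez; subst z; rewrite ?inE ?eqxx ?orbT //; rewrite ze in xNe.
have : ~~ ((c \in e) && (d \in e)).
  by apply: contra ne => /andP[ce de]; rewrite eq_sym eqEcard pair_subset ce de cE cards2 cd.
case/nandP => yNe; apply/orP; [right | left]; apply/subsetP => z ze;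
  by case: (in3 z ze) => ez; subst z; rewrite ?inE ?eqxx ?orbT //; rewrite ze in yNe.
Qed.

Definition is_edge T e := exists2 t, t \in T & e \subset t.

Lemma new_triangles_phi f t : t \in new_triangles f -> phi f \subset t.
Proof. by case/imsetP => x _ ->; apply: subsetUl. Qed.

Lemma perform_eps T f t : t \in perform T f -> eps f \subset t -> phi f \subset t.
Proof. by rewrite in_perform => /orP[/andP[_ /negbTE ->] // | /new_triangles_phi]. Qed.

Lemma perform_old T f t : t \in perform T f -> ~~ (phi f \subset t) -> t \in T.
Proof. by rewrite in_perform => /orP[/andP[-> _] // | /new_triangles_phi ->]. Qed.

Lemma perform_keep T f t : t \in T -> ~~ (eps f \subset t) -> t \in perform T f.
Proof. by move=> Ht ne; rewrite in_perform Ht ne. Qed.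

Lemma perform_new T f t : t \in new_triangles f -> t \in perform T f.
Proof. by move=> H; rewrite in_perform H orbT. Qed.

Lemma perform_commute T f g :
  (forall t, t \in new_triangles g -> ~~ (eps f \subset t)) ->
  (forall t, t \in new_triangles f -> ~~ (eps g \subset t)) ->
  perform (perform T g) f = perform (perform T f) g.
Proof.
move=> A B; apply/setP => t; rewrite !in_perform.
case Ng: (t \in new_triangles g); first by rewrite (negbTE (A t Ng)) !orbT andbT.
case Nf: (t \in new_triangles f); first by rewrite (negbTE (B t Nf)) !orbT.
by rewrite !orbF andbAC.
Qed.

End Perform.

Lemma after0 n (T : {set {set 'I_n}}) (F : seq (flip n)) : after T F 0 = T.
Proof. by rewrite /after take0. Qed.

Lemma afterS n (T : {set {set 'I_n}}) (F : seq (flip n)) m : m < size F ->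
  after T F m.+1 = perform (after T F m) (nth (f0 n) F m).
Proof. by move=> h; rewrite /after (take_nth (f0 n) h) foldl_rcons. Qed.

Lemma after_cons n (T : {set {set 'I_n}}) (f : flip n) F m :
  after T (f :: F) m.+1 = after (perform T f) F m.
Proof. by []. Qed.

Lemma bumpE k x : bump k x = if x < k then x else x.+1.
Proof. by rewrite /bump ltnNge; case: leqP; rewrite ?add0n ?add1n. Qed.

Lemma ltn_bump2 h i j : (bump h i < bump h j) = (i < j).
Proof. by rewrite !ltnNge leq_bump2. Qed.

Lemma map_bump_unbump k (s : seq nat) : k \notin s -> map (bump k) (map (unbump k) s) = s.
Proof.
move=> kNs; rewrite -map_comp -[RHS]map_id; apply/eq_in_map => x xs /=.
by apply: unbumpK; apply: contraNneq kNs => <-.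
Qed.

Definition del_nth T (k : nat) (s : seq T) := take k s ++ drop k.+1 s.

Lemma size_del_nth T k (s : seq T) : k < size s -> size (del_nth k s) = (size s).-1.
Proof. by move=> ks; rewrite size_cat size_take ks size_drop; lia. Qed.

Lemma nth_del_nth T (x0 : T) k (s : seq T) i : k < size s ->
  nth x0 (del_nth k s) i = nth x0 s (bump k i).
Proof.
move=> ks; rewrite nth_cat size_take ks bumpE; case: ltnP => ik; first by rewrite nth_take.
by rewrite nth_drop; congr nth; lia.
Qed.

Local Open Scope ring_scope.

Section OrientAlgebra.
Variable R : comRingType.

Definition orient_pt (P Q X : R * R) : R :=
  (Q.1 - P.1) * (X.2 - P.2) - (Q.2 - P.2) * (X.1 - P.1).

Definition bary3 (al be ga : R) (u v w : R * R) : R * R :=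
  (al * u.1 + be * v.1 + ga * w.1, al * u.2 + be * v.2 + ga * w.2).

Lemma orient_pt_bary3 P Q al be ga u v w : al + be + ga = 1 ->
  orient_pt P Q (bary3 al be ga u v w) =
  al * orient_pt P Q u + be * orient_pt P Q v + ga * orient_pt P Q w.
Proof.
move=> s1; have -> : ga = 1 - al - be by rewrite -s1; ring.
by rewrite /orient_pt /bary3 /=; ring.
Qed.

Lemma bary3_0r al be u v w w' : bary3 al be 0 u v w = bary3 al be 0 u v w'.
Proof. by rewrite /bary3 !mul0r. Qed.

Lemma orient_pt_swap P Q X : orient_pt P Q X = - orient_pt Q P X.
Proof. by rewrite /orient_pt; ring. Qed.

End OrientAlgebra.

Lemma bary3_cramer (R : fieldType) (U V W X : R * R) : orient_pt U V W != 0 ->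
  let D := orient_pt U V W in
  X = bary3 (orient_pt X V W / D) (orient_pt U X W / D) (orient_pt U V X / D) U V W
  /\ orient_pt X V W / D + orient_pt U X W / D + orient_pt U V X / D = 1.
Proof.
move=> o0 D; split; last by rewrite /D /orient_pt; field.
by case: X => x1 x2; rewrite /bary3 /D /orient_pt /=; congr (_, _); field.
Qed.

Lemma eq_of_scaled_diff (R : pzRingType) (X Y A B k : R) :
  X - Y = k * (A - B) -> A = B -> X = Y.
Proof. by move=> h e; apply/eqP; rewrite -subr_eq0 h e subrr mulr0. Qed.

Lemma eq0_of_opposite_signs (R : realDomainType) (x y u v : R) :
  0 <= x -> 0 <= y -> u * v < 0 -> x * v = y * u -> x = 0.
Proof.
move=> x0 y0 uv E.
have v0 : v != 0 by apply: contraTneq uv => ->; rewrite mulr0 ltxx.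
have xvv : x * (v * v) <= 0 by rewrite mulrA E -mulrA mulr_ge0_le0 // ltW.
have vv : 0 < v * v by rewrite -expr2 exprn_even_gt0.
set w := v * v in xvv vv; nra.
Qed.

Section Sign.
Variable R : realFieldType.

Lemma divr_ge0_mul (x y : R) : y != 0 -> 0 <= x * y -> 0 <= x / y.
Proof.
move=> y0 H; have -> : x / y = (x * y) / (y * y) by field.
by rewrite divr_ge0 // -expr2 sqr_ge0.
Qed.

Lemma divr_gt0_mul (x y : R) : 0 < x * y -> 0 < x / y.
Proof.
move=> H; have y0 : y != 0 by apply: contraTneq H => ->; rewrite mulr0 ltxx.
have -> : x / y = (x * y) / (y * y) by field.
by rewrite divr_gt0 // -expr2 exprn_even_gt0.
Qed.

End Sign.

Section Convex.
Variables (R : realFieldType) (n : nat) (p : 'I_n -> R * R).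

Lemma orientE a b c : orient p a b c = orient_pt (p a) (p b) (p c).
Proof. by []. Qed.

Lemma orient_neq0_distinct a b c : orient p a b c != 0 -> [/\ a != b, a != c & b != c].
Proof. by move=> H; split; apply: contraNneq H => ->; apply/eqP; rewrite /orient; ring. Qed.

Lemma sum_support3 (M : nmodType) (G : 'I_n -> M) u v w : u != v -> u != w -> v != w ->
  (forall i, i \notin [set u; v; w] -> G i = 0) -> \sum_i G i = G u + G v + G w.
Proof.
move=> uv uw vw G0.
rewrite (bigD1 u) // (bigD1 v) 1?eq_sym // (bigD1 w) /= 1?eq_sym ?uw 1?eq_sym ?vw //.
rewrite big1 ?addr0 ?addrA // => i /andP[/andP[iu iv] iw]; apply: G0.
by rewrite !inE !negb_or iu iv iw.
Qed.

Lemma in_conv_subset (S S' : {set 'I_n}) x : S \subset S' -> in_conv p S x -> in_conv p S' x.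
Proof.
move=> sS [w [w0 wS w1 E]]; exists w; split => // i iS.
by apply: wS; apply: contra iS; apply: (subsetP sS).
Qed.

Variables (u v w : 'I_n).
Hypotheses (uv : u != v) (uw : u != w) (vw : v != w).

Lemma in_conv3E (S : {set 'I_n}) x : S \subset [set u; v; w] -> in_conv p S x ->
  exists al be ga, [/\ 0 <= al, 0 <= be, 0 <= ga & al + be + ga = 1] /\
     [/\ u \notin S -> al = 0, v \notin S -> be = 0 & w \notin S -> ga = 0] /\
     x = bary3 al be ga (p u) (p v) (p w).
Proof.
move=> sS [W [W0 WS W1 ->]].
have Wout i : i \notin [set u; v; w] -> W i = 0.
  by move=> iS; apply: WS; apply: contra iS; apply: (subsetP sS).
have sumW (f : R * R -> R) : \sum_i W i * f (p i) =
    W u * f (p u) + W v * f (p v) + W w * f (p w).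
  by apply: sum_support3 => // i /Wout ->; rewrite mul0r.
exists (W u), (W v), (W w); split; [|split].
- by split => //; rewrite -W1 (sum_support3 uv uw vw Wout).
- by split; apply: WS.
- by rewrite (sumW fst) (sumW snd).
Qed.

Lemma in_conv3I (S : {set 'I_n}) x al be ga :
  0 <= al -> 0 <= be -> 0 <= ga -> al + be + ga = 1 ->
  (u \notin S -> al = 0) -> (v \notin S -> be = 0) -> (w \notin S -> ga = 0) ->
  x = bary3 al be ga (p u) (p v) (p w) -> in_conv p S x.
Proof.
move=> a0 b0 g0 s1 Su Sv Sw ->.
pose W i := if i == u then al else if i == v then be else if i == w then ga else 0.
have Wu : W u = al by rewrite /W eqxx.
have Wv : W v = be by rewrite /W eq_sym (negbTE uv) eqxx.
have Ww : W w = ga by rewrite /W eq_sym (negbTE uw) eq_sym (negbTE vw) eqxx.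
have Wout i : i \notin [set u; v; w] -> W i = 0.
  by rewrite !inE !negb_or /W => /andP[/andP[/negbTE-> /negbTE->] /negbTE->].
have sumW (f : R * R -> R) : \sum_i W i * f (p i) =
    al * f (p u) + be * f (p v) + ga * f (p w).
  by rewrite -Wu -Wv -Ww; apply: sum_support3 => // i /Wout ->; rewrite mul0r.
exists W; split.
- by move=> i; rewrite /W; do !case: ifP => // _.
- move=> i iS; rewrite /W; case: ifP => [/eqP ei|_]; first by apply: Su; rewrite -ei.
  case: ifP => [/eqP ei|_]; first by apply: Sv; rewrite -ei.
  by case: ifP => [/eqP ei|_] //; apply: Sw; rewrite -ei.
- by rewrite (sum_support3 uv uw vw Wout) Wu Wv Ww.
- by rewrite (sumW fst) (sumW snd).
Qed.

End Convex.

Section Triangulations.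
Variables (R : realFieldType) (n : nat) (p : 'I_n -> R * R).
Implicit Types (a b c d u v w y z : 'I_n) (e t : {set 'I_n}) (T : {set {set 'I_n}}) (f : flip n).

Lemma in_conv_triangle u v w x : orient p u v w != 0 ->
  0 <= orient_pt x (p v) (p w) * orient p u v w ->
  0 <= orient_pt (p u) x (p w) * orient p u v w ->
  0 <= orient_pt (p u) (p v) x * orient p u v w ->
  in_conv p [set u; v; w] x.
Proof.
move=> o0 h1 h2 h3; have [uv uw vw] := orient_neq0_distinct o0.
have [E S] := bary3_cramer x o0.
by apply: (in_conv3I uv uw vw _ _ _ S) E; rewrite ?divr_ge0_mul // !inE eqxx ?orbT.
Qed.

Lemma triangle_orient a b c : is_triangle p [set a; b; c] -> orient p a b c != 0.
Proof.
move=> [a' [b' [c' [E o]]]]; have [h1 h2 h3] := orient_neq0_distinct o.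
have /set3P Ha : a' \in [set a; b; c] by rewrite E !inE eqxx.
have /set3P Hb : b' \in [set a; b; c] by rewrite E !inE eqxx orbT.
have /set3P Hc : c' \in [set a; b; c] by rewrite E !inE eqxx orbT.
move: o h1 h2 h3.
case: Ha => ->; case: Hb => ->; case: Hc => ->; rewrite ?eqxx // !orientE /orient_pt => o _ _ _;
  apply: contra o => /eqP H; apply/eqP; lra.
Qed.

Local Ltac set3_eq := apply/setP => ?; rewrite !inE; do 3! (case: eqP => _).

Lemma triangle_through t a b : is_triangle p t -> a \in t -> b \in t -> a != b ->
  exists z, t = [set a; b; z] /\ orient p a b z != 0.
Proof.
move=> Ht at_ bt ab.
suff [z Ez] : exists z, t = [set a; b; z].
  by exists z; split => //; apply: triangle_orient; rewrite -Ez.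
have [a' [b' [c' [Et _]]]] := Ht; rewrite Et in at_ bt.
case/set3P: at_ => ?; case/set3P: bt => ?; subst; rewrite ?eqxx // in ab;
  first [ by exists a'; set3_eq | by exists b'; set3_eq | by exists c'; set3_eq ].
Qed.

Lemma same_side_common_point a b u v : 0 < orient p a b u * orient p a b v ->
  exists x, [/\ in_conv p [set a; b; u] x, in_conv p [set a; b; v] x &
                orient_pt (p a) (p b) x != 0].
Proof.
move=> Huv.
have ou : orient p a b u != 0 by apply: contraTneq Huv => ->; rewrite mul0r ltxx.
have ov : orient p a b v != 0 by apply: contraTneq Huv => ->; rewrite mulr0 ltxx.
have [ab au bu] := orient_neq0_distinct ou.
move: Huv (ou) (ov); rewrite !orientE.
set Ou := orient_pt _ _ (p u); set Ov := orient_pt _ _ (p v) => Huv ou' ov'.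
set K1 := orient_pt (p b) (p v) (p u); set K2 := orient_pt (p v) (p a) (p u).
(* x is a point of abu so close to the midpoint of ab that it also lies in abv *)
set A := `|K1 * Ov| + `|K2 * Ov| + 1; set G := Ov ^+ 2; set S := A + A + G.
have G0 : 0 < G by rewrite exprn_even_gt0.
have A0 : 0 < A by rewrite ltr_wpDl ?addr_ge0.
have S0 : 0 < S by rewrite /S; lra.
have S0' : S != 0 by rewrite gt_eqF.
have AK1 : 0 <= A + K1 * Ov.
  by have := lerNnormlW (lexx `|K1 * Ov|); have := normr_ge0 (K2 * Ov); rewrite /A; lra.
have AK2 : 0 <= A + K2 * Ov.
  by have := lerNnormlW (lexx `|K2 * Ov|); have := normr_ge0 (K1 * Ov); rewrite /A; lra.
set x := bary3 (A / S) (A / S) (G / S) (p a) (p b) (p u).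
exists x; split.
- apply: (in_conv3I ab au bu (al := A / S) (be := A / S) (ga := G / S));
    rewrite ?divr_ge0 ?ltW ?inE ?eqxx ?orbT //.
  by rewrite /S; field.
- apply: in_conv_triangle; rewrite ?orientE -/Ov //.
  + have -> : orient_pt x (p b) (p v) * Ov = Ov ^+ 2 * (A + K1 * Ov) / S.
      by rewrite /x /S /K1 /G /Ov /bary3 /orient_pt /=; field.
    by apply: divr_ge0 (ltW S0); rewrite mulr_ge0 ?sqr_ge0.
  + have -> : orient_pt (p a) x (p v) * Ov = Ov ^+ 2 * (A + K2 * Ov) / S.
      by rewrite /x /S /K2 /G /Ov /bary3 /orient_pt /=; field.
    by apply: divr_ge0 (ltW S0); rewrite mulr_ge0 ?sqr_ge0.
  + have -> : orient_pt (p a) (p b) x * Ov = G * (Ou * Ov) / S.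
      by rewrite /x /S /Ou /G /Ov /bary3 /orient_pt /=; field.
    by apply: divr_ge0 (ltW S0); rewrite mulr_ge0 ?ltW.
have -> : orient_pt (p a) (p b) x = G * Ou / S by rewrite /x /S /Ou /G /bary3 /orient_pt /=; field.
by rewrite !mulf_neq0 ?invr_eq0 // gt_eqF.
Qed.

Lemma triangulation_opposite T a b u v : is_triangulation p T ->
  [set a; b; u] \in T -> [set a; b; v] \in T -> u != v ->
  orient p a b u * orient p a b v < 0.
Proof.
case=> [Htri _ Hint _] Hu Hv uv.
have ou := triangle_orient (Htri _ Hu); have ov := triangle_orient (Htri _ Hv).
have [ab au bu] := orient_neq0_distinct ou.
rewrite ltNge le0r mulf_eq0 (negbTE ou) (negbTE ov) /=; apply/negP => Huv.
have [x [Xu Xv /eqP Xab]] := same_side_common_point Huv; apply: Xab.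
have /(in_conv3E ab au bu (subsetIl _ _)) [al [be [ga [[_ _ _ s1] [[_ _ hu] ->]]]]] :=
  (Hint _ _ Hu Hv x).1 (conj Xu Xv).
have u_out : u \notin [set a; b; u] :&: [set a; b; v].
  by rewrite !inE eqxx (eq_sym u) (negbTE au) (eq_sym u) (negbTE bu) (negbTE uv).
by rewrite orient_pt_bary3 // (hu u_out) /orient_pt; ring.
Qed.

Lemma triangles_on_edge T a b c d t : is_triangulation p T ->
  [set a; b; c] \in T -> [set a; b; d] \in T -> c != d -> t \in T -> a \in t -> b \in t ->
  t = [set a; b; c] \/ t = [set a; b; d].
Proof.
move=> HT Hc Hd cd Ht at_ bt; have [Htri _ _ _] := HT.
have [ab _ _] := orient_neq0_distinct (triangle_orient (Htri _ Hc)).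
have [z [Ez _]] := triangle_through (Htri _ Ht) at_ bt ab; rewrite Ez in Ht *.
case: (eqVneq c z) => [<-|cz]; first by left.
case: (eqVneq d z) => [<-|dz]; first by right.
exfalso; have := triangulation_opposite HT Hc Hd cd; have := triangulation_opposite HT Hc Ht cz.
have := triangulation_opposite HT Hd Ht dz; nra.
Qed.

Lemma convex_quad_orient a b c d : convex_quad p a b c d ->
  [/\ orient p a b c != 0, orient p a b d != 0, orient p c d a != 0 & orient p c d b != 0].
Proof.
by case=> h1 h2; split; [move: h1 | move: h1 | move: h2 | move: h2];
  apply: contraTneq => ->; rewrite ?mul0r ?mulr0 ltxx.
Qed.

Lemma convex_quad_sym a b c d : convex_quad p a b c d ->
  [/\ convex_quad p b a c d, convex_quad p a b d c & convex_quad p c d a b].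
Proof.
case; rewrite /convex_quad !orientE => h1 h2.
split; split; rewrite ?orientE; rewrite ?(orient_pt_swap (p b) (p a)) ?(orient_pt_swap (p d) (p c));
  lra.
Qed.

(* with third weight 0, [bary3] is a point of the segment joining its first two points *)
Lemma convex_quad_diagonals_meet a b c d : convex_quad p a b c d ->
  exists mu nu, [/\ 0 < mu, 0 < 1 - mu, 0 < nu, 0 < 1 - nu &
     bary3 mu (1 - mu) 0 (p c) (p d) (p c) = bary3 nu (1 - nu) 0 (p a) (p b) (p a)].
Proof.
case; rewrite !orientE.
set Oc := orient_pt _ _ (p c); set Od := orient_pt _ _ (p d).
set Ea := orient_pt _ _ (p a); set Eb := orient_pt _ _ (p b) => h1 h2.
have d1 : Od - Oc != 0.
  by apply: contraTneq h1 => /eqP; rewrite subr_eq0 => /eqP ->; rewrite -expr2 -leNgt sqr_ge0.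
have d2 : Eb - Ea != 0.
  by apply: contraTneq h2 => /eqP; rewrite subr_eq0 => /eqP ->; rewrite -expr2 -leNgt sqr_ge0.
exists (Od / (Od - Oc)), (Eb / (Eb - Ea)); split.
- by apply: divr_gt0_mul; nra.
- have -> : 1 - Od / (Od - Oc) = - Oc / (Od - Oc) by field.
  by apply: divr_gt0_mul; nra.
- by apply: divr_gt0_mul; nra.
- have -> : 1 - Eb / (Eb - Ea) = - Ea / (Eb - Ea) by field.
  by apply: divr_gt0_mul; nra.
by rewrite /bary3 /Oc /Od /Ea /Eb /orient_pt /=; congr (_, _); field; rewrite d1 d2.
Qed.

Lemma triangulation_no_crossing_diagonal T a b c d t : is_triangulation p T ->
  [set a; b; c] \in T -> convex_quad p a b c d -> t \in T -> c \in t -> d \in t -> False.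
Proof.
move=> [Htri _ Hint _] Habc q Ht ct dt.
have [oc od ea eb] := convex_quad_orient q.
have [ab ac bc] := orient_neq0_distinct oc; have [_ ad bd] := orient_neq0_distinct od.
have [cd _ _] := orient_neq0_distinct ea.
have [x [Et ox]] := triangle_through (Htri _ Ht) ct dt cd; have [_ cx dx] := orient_neq0_distinct ox.
have [mu [nu [m0 m1 n0 n1 EQ]]] := convex_quad_diagonals_meet q.
set Q := bary3 nu (1 - nu) 0 (p a) (p b) (p c).
have EQcd : Q = bary3 mu (1 - mu) 0 (p c) (p d) (p x).
  by rewrite /Q (bary3_0r _ _ _ _ _ (p a)) -EQ (bary3_0r _ _ _ _ _ (p x)).
have Qabc : in_conv p [set a; b; c] Q.
  by apply: (in_conv3I ab ac bc (al := nu) (be := 1 - nu) (ga := 0));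
    rewrite ?lexx ?ltW ?inE ?eqxx ?orbT //; ring.
have Qt : in_conv p t Q.
  by rewrite Et EQcd; apply: (in_conv3I cd cx dx (al := mu) (be := 1 - mu) (ga := 0));
    rewrite ?lexx ?ltW ?inE ?eqxx ?orbT //; ring.
have /(in_conv3E ab ac bc (subsetIr _ _)) [al [be [ga [[a0 b0 g0 s1] [[ha hb _] EQabc]]]]] :=
  (Hint _ _ Ht Habc Q).1 (conj Qt Qabc).
have ga0 : ga = 0.
  have : ga * orient p a b c = 0.
    rewrite -[RHS](_ : orient_pt (p a) (p b) Q = 0); last by rewrite orient_pt_bary3 /orient_pt; ring.
    by rewrite EQabc orient_pt_bary3 // orientE /orient_pt; ring.
  by move/eqP; rewrite mulf_eq0 (negbTE oc) orbF => /eqP.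
have Ecd : al * orient p c d a + be * orient p c d b = 0.
  rewrite -[RHS](_ : orient_pt (p c) (p d) Q = 0); last first.
    by rewrite EQcd orient_pt_bary3 /orient_pt; ring.
  by rewrite EQabc orient_pt_bary3 // ga0 !orientE /orient_pt; ring.
have : ~~ ((a \in t) && (b \in t)).
  rewrite Et !inE (negbTE ac) (negbTE ad) (negbTE bc) (negbTE bd) /=.
  by apply: contra ab => /andP[/eqP -> /eqP ->].
case/nandP=> [aNt | bNt].
  have al0 : al = 0 by apply: ha; rewrite inE (negbTE aNt).
  by move/eqP: eb; apply; move: Ecd; rewrite al0 (_ : be = 1); lra.
have be0 : be = 0 by apply: hb; rewrite inE (negbTE bNt).
by move/eqP: ea; apply; move: Ecd; rewrite be0 (_ : al = 1); lra.
Qed.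

Lemma convex_quad_cover a b c d x : convex_quad p a b c d -> in_conv p [set c; d; a] x ->
  in_conv p [set a; b; c] x \/ in_conv p [set a; b; d] x.
Proof.
move=> q Hx; have [oc od ea _] := convex_quad_orient q.
have [ab ac bc] := orient_neq0_distinct oc; have [_ ad bd] := orient_neq0_distinct od.
have [cd ca da] := orient_neq0_distinct ea.
have [mu [nu [m0 m1 n0 n1 EQ]]] := convex_quad_diagonals_meet q.
have e1 := congr1 fst EQ; have e2 := congr1 snd EQ; rewrite /bary3 /= in e1 e2.
have [al [be [ga [[a0 b0 g0 s1] [_ ->]]]]] := in_conv3E cd ca da (subxx _) Hx.
have ga1 : ga = 1 - al - be by lra.
have m0' : mu != 0 by rewrite gt_eqF.
have m1' : 1 - mu != 0 by rewrite gt_eqF.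
(* shift as much of the weight of x on c and d as possible to the crossing point of the
   diagonals, which lies on ab; what is left sits on c or on d only *)
case: (leP (be * mu) (al * (1 - mu))) => hle; [left | right].
  set s := be / (1 - mu).
  have s0 : 0 <= s by rewrite divr_ge0 // ltW.
  apply: (in_conv3I ab ac bc (al := s * nu + ga) (be := s * (1 - nu)) (ga := al - s * mu));
    rewrite ?inE ?eqxx ?orbT //.
  - by rewrite addr_ge0 // mulr_ge0 // ltW.
  - by rewrite mulr_ge0 // ltW.
  - have -> : al - s * mu = (al * (1 - mu) - be * mu) / (1 - mu) by rewrite /s; field.
    by apply: divr_ge0; [rewrite subr_ge0 | exact: ltW].
  - by rewrite ga1 /s; field.
  by rewrite /bary3; congr (_, _); [move: e1 | move: e2];
    apply: (eq_of_scaled_diff (k := s)); rewrite /s; field.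
set s := al / mu.
have s0 : 0 <= s by rewrite divr_ge0 // ltW.
apply: (in_conv3I ab ad bd (al := s * nu + ga) (be := s * (1 - nu)) (ga := be - s * (1 - mu)));
  rewrite ?inE ?eqxx ?orbT //.
- by rewrite addr_ge0 // mulr_ge0 // ltW.
- by rewrite mulr_ge0 // ltW.
- have -> : be - s * (1 - mu) = (be * mu - al * (1 - mu)) / mu by rewrite /s; field.
  by apply: divr_ge0; [rewrite subr_ge0 ltW | exact: ltW].
- by rewrite ga1 /s; field.
by rewrite /bary3; congr (_, _); [move: e1 | move: e2];
  apply: (eq_of_scaled_diff (k := s)); rewrite /s; field.
Qed.

Lemma in_conv_drop_opposite S a b c d x : orient p c d a * orient p c d b < 0 ->
  in_conv p [set c; d; a] x -> in_conv p S x -> S \subset [set b; c; d] ->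
  in_conv p (S :\ b) x.
Proof.
move=> h Hx HS sS.
have ea : orient p c d a != 0 by apply: contraTneq h => ->; rewrite mul0r ltxx.
have eb : orient p c d b != 0 by apply: contraTneq h => ->; rewrite mulr0 ltxx.
have [cd ca da] := orient_neq0_distinct ea; have [_ cb db] := orient_neq0_distinct eb.
have bc : b != c by rewrite eq_sym.
have bd : b != d by rewrite eq_sym.
have [be [ga [de [[b0 g0 d0 s1] [[_ hc hd] E]]]]] := in_conv3E bc bd cd sS HS.
have [ga' [de' [al' [[_ _ a0 s1'] [_ E']]]]] := in_conv3E cd ca da (subxx _) Hx.
have be0 : be = 0.
  (* x is on the side of a with respect to cd, so it has no weight on b *)
  apply: (eq0_of_opposite_signs b0 a0 h).
  have -> : be * orient p c d b = orient_pt (p c) (p d) x.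
    by rewrite E orient_pt_bary3 // orientE /orient_pt; ring.
  by rewrite E' orient_pt_bary3 // orientE /orient_pt; ring.
apply: (in_conv3I bc bd cd (al := be) (be := ga) (ga := de)) => //.
- by move=> cS; apply: hc; apply: contra cS; rewrite !inE eq_sym bc.
- by move=> dS; apply: hd; apply: contra dS; rewrite !inE eq_sym bd.
Qed.

Lemma flip_old_new_meet T a b c d t x : is_triangulation p T ->
  [set a; b; c] \in T -> [set a; b; d] \in T -> convex_quad p a b c d -> t \in T ->
  ~~ ((a \in t) && (b \in t)) -> in_conv p t x -> in_conv p [set c; d; a] x ->
  in_conv p (t :&: [set c; d; a]) x.
Proof.
move=> [_ _ Hint _] Hc Hd q Ht nab Xt Xa.
have opp : orient p c d a * orient p c d b < 0 by case: q.
suff meet y : (y == c) || (y == d) -> [set a; b; y] \in T -> in_conv p [set a; b; y] x ->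
    in_conv p (t :&: [set c; d; a]) x.
  by case: (convex_quad_cover q Xa); [apply: meet Hc; rewrite eqxx | apply: meet Hd; rewrite eqxx orbT].
move=> ycd Hy Xy; have Xty := (Hint _ _ Ht Hy x).1 (conj Xt Xy).
have yt z : z \in t :&: [set a; b; y] -> z != a -> z != b -> z \in t :&: [set c; d; a].
  by rewrite !inE => /andP[zt /orP[/orP[->|->]|/eqP zy]] // _ _; rewrite zt zy ycd.
case: (boolP (b \in t)) => bt; last first.
  apply: in_conv_subset Xty; apply/subsetP => z Hz.
  case: (eqVneq z a) => [eza|za].
    by move: Hz; rewrite eza !inE eqxx !orbT !andbT.
  by apply: yt => //; apply: contraTneq Hz => ->; rewrite inE (negbTE bt).
have aNt : a \notin t by apply: contra nab => ->.
apply: in_conv_subset (in_conv_drop_opposite opp Xa Xty _).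
  apply/subsetP => z; rewrite in_setD1 => /andP[zb Hz]; apply: yt => //.
  by apply: contraTneq Hz => ->; rewrite inE (negbTE aNt).
apply/subsetP => z; rewrite !inE => /andP[zt /orP[/orP[/eqP za|->]|/eqP ->]] //.
  by move: zt; rewrite za (negbTE aNt).
by case/orP: ycd => ->; rewrite orbT.
Qed.

Lemma flip_new_new_meet a b c d x : orient p c d a * orient p c d b < 0 ->
  in_conv p [set c; d; a] x -> in_conv p [set c; d; b] x ->
  in_conv p ([set c; d; a] :&: [set c; d; b]) x.
Proof.
move=> opp Xa Xb.
have sub : [set c; d; b] \subset [set b; c; d].
  by apply/subsetP => z; rewrite !inE -orbA => /or3P[] ->; rewrite ?orbT.
apply: in_conv_subset (in_conv_drop_opposite opp Xa Xb sub).
by apply/subsetP => z; rewrite !inE => /andP[zb]; rewrite (negbTE zb) orbF => ->.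
Qed.

Lemma perform_triangulation T f a b c d : is_triangulation p T ->
  eps f = [set a; b] -> [set a; b; c] \in T -> [set a; b; d] \in T -> phi f = [set c; d] ->
  convex_quad p a b c d -> is_triangulation p (perform T f).
Proof.
move=> HT Ee Hc Hd Ep q; have [Htri Hcov Hint Hvert] := HT.
have [_ _ ea eb] := convex_quad_orient q; have [cd _ _] := orient_neq0_distinct ea.
have [qba _ qcd] := convex_quad_sym q; have [qdcab _ _] := convex_quad_sym qcd.
have Hmem t := in_perform_flip T t Ee Ep.
have Hab t : t \in T -> (a \in t) && (b \in t) -> t = [set a; b; c] \/ t = [set a; b; d].
  by move=> Ht /andP[at_ bt]; apply: (triangles_on_edge HT Hc Hd _ Ht).
have Eba z : [set b; a; z] = [set a; b; z] by rewrite (setUC [set b]).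
have old_new t s x : t \in T -> ~~ ((a \in t) && (b \in t)) ->
    (s == [set c; d; a]) || (s == [set c; d; b]) -> in_conv p t x -> in_conv p s x ->
    in_conv p (t :&: s) x.
  move=> Ht nab /orP[] /eqP -> Xt Xs; first exact: (flip_old_new_meet HT Hc Hd q Ht nab).
  by apply: (flip_old_new_meet HT _ _ qba Ht) => //; rewrite ?Eba // andbC.
split.
- move=> t; rewrite Hmem => /orP[/orP[/andP[/Htri // _] | /eqP ->] | /eqP ->].
    by exists c, d, a.
  by exists c, d, b.
- move=> x; split; last by case=> t _; apply: in_conv_subset; apply: subsetT.
  move/Hcov => [t Ht Xt]; case: (boolP ((a \in t) && (b \in t))) => sab; last first.
    by exists t; rewrite // Hmem Ht sab.
  have Xcd : in_conv p [set c; d; a] x \/ in_conv p [set c; d; b] x.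
    case: (Hab t Ht sab) => Et; rewrite Et in Xt; first exact: convex_quad_cover qcd Xt.
    by move: (convex_quad_cover qdcab Xt); rewrite !(setUC [set d]).
  by case: Xcd => X; [exists [set c; d; a] | exists [set c; d; b]]; rewrite ?Hmem ?eqxx ?orbT.
- move=> t1 t2 H1 H2 x; split; last first.
    by move=> X; split; apply: in_conv_subset X; [apply: subsetIl | apply: subsetIr].
  case=> X1 X2; move: H1 H2; rewrite !Hmem -!orbA.
  case/orP=> [/andP[T1 n1] | N1]; case/orP=> [/andP[T2 n2] | N2].
  + exact: (Hint _ _ T1 T2 x).1.
  + exact: old_new.
  + by rewrite setIC; apply: old_new.
  + have opp : orient p c d a * orient p c d b < 0 by case: q.
    move: N1 N2 X1 X2 => /orP[] /eqP -> /orP[] /eqP -> X1 X2; rewrite ?setIid //.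
      exact: flip_new_new_meet.
    by rewrite setIC; apply: flip_new_new_meet.
- move=> i; have [t Ht it] := Hvert i.
  case: (boolP ((a \in t) && (b \in t))) => sab; last by exists t; rewrite // Hmem Ht sab.
  case: (Hab t Ht sab) => Et; rewrite Et in it; case/set3P: it => ->;
    by [exists [set c; d; a]; rewrite ?Hmem ?eqxx ?orbT ?inE ?eqxx ?orbT
       | exists [set c; d; b]; rewrite ?Hmem ?eqxx ?orbT ?inE ?eqxx ?orbT].
Qed.

Lemma admissible_edges T f : admissible p T f ->
  [/\ #|phi f| = 2, #|eps f| = 2 & is_edge T (eps f)].
Proof.
case=> [a [b [c [d [-> Hc _ -> q]]]]]; have [oc _ ea _] := convex_quad_orient q.
have [ab _ _] := orient_neq0_distinct oc; have [cd _ _] := orient_neq0_distinct ea.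
by rewrite !cards2 ab cd; split => //; exists [set a; b; c] => //; apply: subsetUl.
Qed.

Lemma is_edge_perform T f e : admissible p T f -> is_edge (perform T f) e -> #|e| = 2 ->
  e != phi f -> is_edge T e.
Proof.
move=> [a [b [c [d [Ee Hc Hd Ep q]]]]] [t Ht sE] cE ne.
have [_ _ ea _] := convex_quad_orient q; have [cd _ _] := orient_neq0_distinct ea.
move: Ht; rewrite in_perform => /orP[/andP[Ht _] | Hn]; first by exists t.
have [y yab Et] : exists2 y, y \in [set a; b] & t = [set c; d; y].
  by move: Hn; rewrite (in_new_triangles _ Ee Ep) => /orP[] /eqP ->;
    [exists a | exists b]; rewrite ?inE ?eqxx ?orbT.
rewrite Et in sE; rewrite Ep in ne.
case/orP: (pair_in_triangle cd sE cE ne) => s2;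
  [exists [set a; b; c] | exists [set a; b; d]] => //; exact: subset_trans s2 (pair_sub_triangle _ yab).
Qed.

Lemma perform_removes_eps T f : admissible p T f -> ~ is_edge (perform T f) (eps f).
Proof.
move=> [a [b [c [d [Ee Hc Hd Ep q]]]]] [t Ht sE].
have [oc od _ _] := convex_quad_orient q.
have [ab ac bc] := orient_neq0_distinct oc; have [_ ad bd] := orient_neq0_distinct od.
move: Ht; rewrite in_perform sE andbF /= (in_new_triangles _ Ee Ep).
move: sE; rewrite Ee pair_subset => /andP[at_ bt] /orP[] /eqP Et; rewrite Et !inE in at_ bt.
  by move: bt; rewrite (negbTE bc) (negbTE bd) /= => /eqP eba; rewrite eba eqxx in ab.
by move: at_; rewrite (negbTE ac) (negbTE ad) /= => /eqP eab; rewrite eab eqxx in ab.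
Qed.

End Triangulations.

Local Close Scope ring_scope.

Section FlipSequence.
Variables (R : realFieldType) (n : nat) (p : 'I_n -> R * R).
Variables (T0 : {set {set 'I_n}}) (F : seq (flip n)).
Hypotheses (HT0 : is_triangulation p T0) (HV : valid p T0 F).
Local Notation T_ m := (after T0 F m).
Local Notation f_ m := (nth (f0 n) F m).

Lemma after_triangulation m : m <= size F -> is_triangulation p (T_ m).
Proof. by case: m => [|m] h; [rewrite after0 | exact: (HV h).2]. Qed.

Lemma admissible_after m : m < size F -> admissible p (T_ m) (f_ m).
Proof. by move=> h; exact: (HV h).1. Qed.

Lemma edge_created (e : {set 'I_n}) j l : j <= l -> l <= size F -> #|e| = 2 -> is_edge (T_ l) e ->
  is_edge (T_ j) e \/ exists2 r, j <= r < l & phi (f_ r) = e.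
Proof.
move=> jl ls cE; elim: l jl ls => [|l IH] jl ls He.
  by left; move: jl; rewrite leqn0 => /eqP ->.
case: (eqVneq j l.+1) => [-> | jSl]; first by left.
case: (eqVneq (phi (f_ l)) e) => [Ep | ne]; first by right; exists l => //; lia.
have He' : is_edge (T_ l) e.
  by apply: (is_edge_perform (admissible_after ls)); rewrite -?afterS // eq_sym.
have jl2 : j <= l by lia.
case: (IH jl2 (ltnW ls) He') => [|[r jr Er]]; first by left.
by right; exists r => //; lia.
Qed.

Section Source.
Variables (k : nat) (hk : k < size F) (source : forall i, ~ Defs.arc T0 F i k).
Variables (a b c d : 'I_n).
Hypotheses (Ee : eps (f_ k) = [set a; b]) (Hc : [set a; b; c] \in T_ k)
  (Hd : [set a; b; d] \in T_ k) (Ep : phi (f_ k) = [set c; d]) (q : convex_quad p a b c d).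

(* The last flip in [m, k) whose new diagonal is phi (f_ m) would have an arc to f_ k. *)
Lemma no_earlier_flip_creates m t : m < k -> t \in T_ k -> [set a; b] \subset t ->
  ~~ (phi (f_ m) \subset t).
Proof.
move=> mk Ht sab; apply/negP => sE; set e := phi (f_ m) in sE.
have [cE _ _] := admissible_edges (admissible_after (ltn_trans mk hk)).
pose P i := (m <= i < k) && (phi (f_ i) == e).
have exP : exists i, P i by exists m; rewrite /P leqnn mk eqxx.
have ubP i : P i -> i <= k by case/andP => /andP[_ /ltnW].
case: (ex_maxnP exP ubP) => i /andP[/andP[mi ik] /eqP Ei] imax.
apply: (source (i := i)); split => //.
- case: (eqVneq e [set a; b]) => E; first by left; rewrite Ei E Ee.
  have [_ cEk _] := admissible_edges (admissible_after hk).
  right; split; [by rewrite Ei Ee | by rewrite Ei | by [] | exists t => //].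
  by rewrite Ei Ee; split.
- move=> r ir rk; apply/eqP => Er.
  have rs : r < size F by lia.
  have gone := perform_removes_eps (admissible_after rs); rewrite -afterS // Er Ei in gone.
  have He : is_edge (T_ k) e by exists t.
  have [|[r' /andP[rr' r'k] Er']] := edge_created (j := r.+1) rk (ltnW hk) cE He.
    exact: gone.
  have : r' <= i by apply: imax; rewrite /P Er' eqxx andbT; apply/andP; split; lia.
  lia.
Qed.

Lemma quad_triangle_persists y m : y \in [set c; d] -> m <= k -> [set a; b; y] \in T_ m.
Proof.
move=> ycd mk.
have Hy : [set a; b; y] \in T_ k by case/set2P: ycd => ->.
rewrite -(subKn mk); elim: (k - m) (leq_subr m k) => [|j IH] jk; first by rewrite subn0.
apply: (perform_old (f := f_ (k - j.+1))).
  by rewrite -afterS ?subnSK //; [apply: IH; lia | lia].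
by apply: no_earlier_flip_creates Hy _; [lia | apply: subsetUl].
Qed.

Lemma cd_neq : c != d.
Proof. by have [_ _ ea _] := convex_quad_orient q; have [] := orient_neq0_distinct ea. Qed.

Lemma triangles_on_ab m t : m <= k -> t \in T_ m -> a \in t -> b \in t ->
  t = [set a; b; c] \/ t = [set a; b; d].
Proof.
move=> mk; apply: (triangles_on_edge (after_triangulation (leq_trans mk (ltnW hk)))) cd_neq.
  by apply: quad_triangle_persists; rewrite ?set21.
by apply: quad_triangle_persists; rewrite ?set22.
Qed.

Lemma earlier_eps_not_in_quad m y : m < k -> y \in [set c; d] ->
  ~~ (eps (f_ m) \subset [set a; b; y]).
Proof.
move=> mk ycd.
have Ht : [set a; b; y] \in perform (T_ m) (f_ m).
  by rewrite -afterS; [apply: quad_triangle_persists | lia].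
apply: contra (perform_eps Ht) (no_earlier_flip_creates mk _ (subsetUl _ _)).
exact: quad_triangle_persists.
Qed.

Lemma earlier_eps_not_in_new m y : m < k -> y \in [set a; b] ->
  ~~ (eps (f_ m) \subset [set c; d; y]).
Proof.
move=> mk yab; apply/negP => sE.
have ms : m < size F by lia.
have [_ cE [t Ht st]] := admissible_edges (admissible_after ms).
case: (eqVneq (eps (f_ m)) [set c; d]) => E.
  have Hc' : [set a; b; c] \in T_ m by apply: quad_triangle_persists; rewrite ?set21 // ltnW.
  by apply: (triangulation_no_crossing_diagonal (after_triangulation (ltnW ms)) Hc' q Ht);
    apply: (subsetP st); rewrite E !inE eqxx ?orbT.
case/orP: (pair_in_triangle cd_neq sE cE E) => s2.
  by move/negP: (earlier_eps_not_in_quad mk (set21 c d)); apply; apply: subset_trans s2 (pair_sub_triangle _ yab).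
by move/negP: (earlier_eps_not_in_quad mk (set22 c d)); apply; apply: subset_trans s2 (pair_sub_triangle _ yab).
Qed.

Lemma earlier_new_not_on_ab m t : m < k -> t \in new_triangles (f_ m) -> ~~ ([set a; b] \subset t).
Proof.
move=> mk Hn; apply/negP => sab.
have Ht : t \in T_ m.+1 by rewrite afterS; [apply: perform_new | lia].
move: (sab); rewrite pair_subset => /andP[at_ bt].
have Htk : t \in T_ k.
  by case: (triangles_on_ab mk Ht at_ bt) => ->; apply: quad_triangle_persists; rewrite ?set21 ?set22.
by move/negP: (no_earlier_flip_creates mk Htk sab); apply; apply: new_triangles_phi.
Qed.

Let F' := del_nth k F.

Let T1 := perform T0 (f_ k).

Lemma size_F' : size F' = (size F).-1.
Proof. exact: size_del_nth. Qed.

Lemma nth_F' x : nth (f0 n) F' x = f_ (bump k x).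
Proof. exact: nth_del_nth. Qed.

(* f_ k commutes with every earlier flip, so it may be performed first *)
Lemma after_F'_before m : m <= k -> after T1 F' m = perform (T_ m) (f_ k).
Proof.
elim: m => [|m IH] mk; first by rewrite !after0.
rewrite afterS ?size_F' ?IH ?nth_F' ?bumpE ?ifT; try lia.
rewrite perform_commute -?afterS //; try lia.
- move=> t; rewrite (in_new_triangles _ Ee Ep) => /orP[] /eqP ->;
    by apply: earlier_eps_not_in_new; rewrite ?set21 ?set22 //; lia.
- by move=> t Hn; rewrite Ee; apply: (earlier_new_not_on_ab (m := m)) => //; lia.
Qed.

Lemma after_F'_after m : k <= m -> m <= size F' -> after T1 F' m = T_ m.+1.
Proof.
move=> km; rewrite -(subnKC km); elim: (m - k) => [|i IH] ms.
  by rewrite addn0 after_F'_before // afterS.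
have ks : k + i < size F' by rewrite addnS in ms.
rewrite addnS afterS // IH ?nth_F' ?bumpE ?ifF -?afterS //; rewrite size_F' in ks *; lia.
Qed.

Lemma T1_triangulation : is_triangulation p T1.
Proof.
apply: (perform_triangulation HT0 Ee _ _ Ep q); rewrite -(after0 T0 F);
  by apply: quad_triangle_persists; rewrite ?set21 ?set22.
Qed.

Lemma earlier_admissible m : m < k -> admissible p (perform (T_ m) (f_ k)) (f_ m).
Proof.
move=> mk; have [a' [b' [c' [d' [Ee' Hc' Hd' Ep' q']]]]] := admissible_after (ltn_trans mk hk).
have keep y : [set a'; b'; y] \in T_ m -> [set a'; b'; y] \in perform (T_ m) (f_ k).
  move=> Hy; apply: perform_keep => //; rewrite Ee pair_subset; apply/negP => /andP[at_ bt].
  have [z [zcd Ez]] : exists z, z \in [set c; d] /\ [set a'; b'; y] = [set a; b; z].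
    by case: (triangles_on_ab (ltnW mk) Hy at_ bt) => ->; [exists c | exists d]; rewrite ?set21 ?set22.
  by move/negP: (earlier_eps_not_in_quad mk zcd); apply; rewrite -Ez Ee'; apply: subsetUl.
by exists a', b', c', d'; split; rewrite ?keep.
Qed.

Lemma valid_F' : valid p T1 F'.
Proof.
move=> m; rewrite size_F' => ms; case: (ltnP m k) => mk.
  rewrite (after_F'_before (ltnW mk)) (after_F'_before mk) nth_F' bumpE mk.
  split; first exact: earlier_admissible.
  apply: (perform_triangulation (after_triangulation _) Ee _ _ Ep q); try lia;
    by apply: quad_triangle_persists; rewrite ?set21 ?set22.
rewrite !after_F'_after ?size_F' ?nth_F' ?bumpE ?ltnNge ?mk /=; try lia.
apply: HV; lia.
Qed.

Lemma after_F'_final : after T1 F' (size F') = T_ (size F).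
Proof. by rewrite after_F'_after size_F' ?prednK //; lia. Qed.

Lemma share_tri_F' e j : j < size F' -> share_tri (after T1 F' j) e (eps (nth (f0 n) F' j)) ->
  share_tri (T_ (bump k j)) e (eps (f_ (bump k j))).
Proof.
rewrite size_F' nth_F' bumpE; case: (ltnP j k) => jk js; last by rewrite after_F'_after // size_F' ltnW.
rewrite (after_F'_before (ltnW jk)); case=> ne c1 c2 [t Ht [s1 s2]]; split => //.
exists t => //; move: Ht; rewrite in_perform => /orP[/andP[Ht _] // | Hn].
move: Hn s2; rewrite (in_new_triangles _ Ee Ep) => /orP[] /eqP -> s2;
  [have := earlier_eps_not_in_new jk (set21 a b) | have := earlier_eps_not_in_new jk (set22 a b)];
  by rewrite s2.
Qed.

Lemma arc_F' i j : Defs.arc T1 F' i j -> Defs.arc T0 F (bump k i) (bump k j).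
Proof.
case=> ij js H3 H4; split.
- by rewrite ltn_bump2.
- by move: js; rewrite size_F' bumpE; case: (ltnP j k); lia.
- case: H3 => [E | S]; first by left; rewrite -!nth_F'.
  by right; rewrite -(nth_F' i); apply: share_tri_F'.
move=> r ir rj; case: (eqVneq r k) => [Er | rk].
  rewrite Er in ir *.
  have ik : i < k by apply: leq_ltn_trans ir; rewrite leq_bump leq_subr.
  rewrite bumpE ik Ee; apply/eqP => E.
  move/negP: (no_earlier_flip_creates ik Hc (subsetUl _ _)); apply; rewrite E; apply: subsetUl.
rewrite -(unbumpK rk) ?ltn_bump2 in ir rj *; rewrite -!nth_F'; exact: H4.
Qed.

Lemma source_to_front :
  [/\ admissible p T0 (f_ k), is_triangulation p T1, valid p T1 F',
      after T1 F' (size F') = T_ (size F) &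
      forall i j, Defs.arc T1 F' i j -> Defs.arc T0 F (bump k i) (bump k j)].
Proof.
split; [|exact: T1_triangulation|exact: valid_F'|exact: after_F'_final|exact: arc_F'].
rewrite -(after0 T0 F); exists a, b, c, d.
by split; rewrite ?quad_triangle_persists ?set21 ?set22.
Qed.

End Source.
End FlipSequence.

Lemma valid_cons (R : realFieldType) n (p : 'I_n -> R * R) T (f : flip n) G :
  admissible p T f -> is_triangulation p (perform T f) -> valid p (perform T f) G ->
  valid p T (f :: G).
Proof.
move=> Hf HT HG [|m] /= hm; first by rewrite after0 after_cons after0.
by rewrite !after_cons; apply: HG.
Qed.

Lemma valid_reorder (R : realFieldType) (n : nat) (p : 'I_n -> R * R) r
  (T0 : {set {set 'I_n}}) (F : seq (flip n)) (idx : seq nat) :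
  size F = r -> is_triangulation p T0 -> valid p T0 F ->
  uniq idx -> size idx = size F -> all (fun x => x < size F) idx ->
  (forall i j, Defs.arc T0 F i j -> index i idx < index j idx) ->
  valid p T0 (map (nth (f0 n) F) idx) /\
  after T0 (map (nth (f0 n) F) idx) (size F) = after T0 F (size F).
Proof.
elim: r T0 F idx => [|r IH] T0 F idx sF HT0 HV Hu Hs Ha Htop.
  by move: Hs; rewrite sF => /size0nil ->; split; [move=> m; rewrite ltn0 | rewrite !after0].
case: idx Hu Hs Ha Htop => [|k idx'] /=; first by rewrite sF.
move=> /andP[kNidx Hu'] Hs /andP[hk Ha'] Htop.
have source i : ~ Defs.arc T0 F i k by move/Htop; rewrite eqxx ltn0.
have [a [b [c [d [Ee Hc Hd Ep q]]]]] := admissible_after HV hk.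
have [Hk0 HT1 HV1 final arcs] := source_to_front HT0 HV hk source Ee Hc Hd Ep q.
set F' := del_nth k F in HV1 arcs final *; set T1 := perform T0 _ in Hk0 HT1 HV1 arcs final *.
set idx2 := map (unbump k) idx'.
have bump_inj := can_inj (bumpK k).
have Eidx : map (bump k) idx2 = idx' by rewrite map_bump_unbump.
have sF' : size F' = r by rewrite size_del_nth // sF.
have [V2 A2] : valid p T1 (map (nth (f0 n) F') idx2) /\
    after T1 (map (nth (f0 n) F') idx2) (size F') = after T1 F' (size F').
  apply: IH => //.
  - by rewrite -(map_inj_uniq bump_inj) Eidx.
  - by move: Hs; rewrite size_map sF' sF => -[].
  - apply/allP => x xi; have : bump k x \in idx' by rewrite -Eidx map_f.
    by move/(allP Ha'); rewrite sF' bumpE; case: (ltnP x k); lia.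
  - move=> i j /arcs /Htop.
    by rewrite !(negbTE (neq_bump _ _)) ltnS -Eidx !(index_map bump_inj).
have EG : map (nth (f0 n) F) idx' = map (nth (f0 n) F') idx2.
  by rewrite -Eidx -map_comp; apply: eq_map => x /=; rewrite nth_del_nth.
rewrite EG; split; first exact: valid_cons V2.
by rewrite {1}sF after_cons -sF' A2 final.
Qed.

Theorem lemma1 (R : realFieldType) (n : nat) (p : 'I_n -> R * R)
  (T0 : {set {set 'I_n}}) (F : seq (flip n)) (s : {perm 'I_(size F)}) :
  injective p -> is_triangulation p T0 -> valid p T0 F ->
  topo_sort T0 F s ->
  valid p T0 (permuted F s) /\
  after T0 (permuted F s) (size F) = after T0 F (size F).
Proof.
move=> _ HT0 HV Htop.
pose g (x : 'I_(size F)) := val (s x).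
have g_inj : injective g by move=> x y /val_inj; apply: perm_inj.
set idx := [seq g x | x <- enum 'I_(size F)].
have idxE (x : 'I_(size F)) : index (val x) idx = val ((s^-1)%g x).
  by rewrite -{1}(permKV s x) /idx -[val (s _)]/(g _) (index_map g_inj) index_enum_ord.
have -> : permuted F s = map (nth (f0 n) F) idx by rewrite /permuted /idx -map_comp.
apply: (valid_reorder (r := size F)) => //.
- by rewrite /idx (map_inj_uniq g_inj) enum_uniq.
- by rewrite size_map size_enum_ord.
- by apply/allP => x /mapP [y _ ->]; apply: ltn_ord.
move=> i j Hij; have [ij js _ _] := Hij; have is_ : i < size F by lia.
by rewrite -[i]/(val (Ordinal is_)) -[j]/(val (Ordinal js)) !idxE; apply: Htop.
Qed.
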